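(* Let $\ell,t,s,d,m$ be positive integers with $m\ge d$, and $\mathbb{F}$ a finite field. Suppose $\pi=(\mathsf{Share},\mathsf{Eval},\mathsf{Rec})$ is a $t$-private $s$-server HSS scheme for a non-trivial class $\mathcal{F}\subseteq\mathrm{POLY}_{d,m}(\mathbb{F})^\ell$, which is linear over $\mathbb{F}$, whose $\mathsf{Share}$ is $t$-CNF sharing, and whose download rate equals $(s-dt)/s$. Let $n=\ell s/(s-dt)$. Then there exist a linear code $\mathcal{C}\subseteq\mathbb{F}^n$ of rate $(s-dt)/s$ and a labeling $\mathcal{L}:[n]\to[s]$ with $\Delta_{\mathcal{L}}(\mathcal{C})\ge dt+1$. (Specifically, $\mathcal{C}$ is the row span of the reconstruction matrix of $\pi$, and $\mathcal{L}(r)$ is the server sending the $r$-th downloaded symbol.)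
   Context: $\mathrm{POLY}_{d,m}(\mathbb{F})$: polynomials in $\mathbb{F}[X_1,\ldots,X_m]$ of total degree $\le d$. Amortized HSS for $\mathcal{F}\subseteq\mathrm{POLY}_{d,m}(\mathbb{F})^\ell$: $\ell m$ secrets $x^{(i)}_k\in\mathbb{F}$, $\mathbf{x}^{(i)}=(x^{(i)}_1,\dots,x^{(i)}_m)$, each shared independently by randomized $\mathsf{Share}$ into $s$ shares, server $j$ receiving the $j$-th share of each; given $\mathbf{f}=(f_1,\ldots,f_\ell)\in\mathcal{F}$, server $j$ computes output share $z_j=\mathsf{Eval}(\mathbf{f},j,\text{its shares})\in\mathbb{F}^{n_j}$ (arbitrary function); $\mathsf{Rec}(z_1\circ\cdots\circ z_s)$ must equal $(f_i(\mathbf{x}^{(i)}))_{i\in[\ell]}$ with probability 1 for all secrets and $\mathbf{f}$. $t$-private: any $\le t$ shares of a secret have distribution independent of the secret. Linear: $\mathsf{Share}$ and $\mathsf{Rec}:\mathbb{F}^{\sum n_j}\to\mathbb{F}^\ell$ are $\mathbb{F}$-linear ($\mathsf{Eval}$ arbitrary). Download rate: $\ell/\sum_j n_j$ (ratio of output bits to downloaded bits). $t$-CNF sharing of $x\in\mathbb{F}$ among $s$ servers: choose $y_T\in\mathbb{F}$ for all $T\subseteq[s]$, $|T|=t$, uniformly at random subject to $\sum_T y_T=x$; server $j$ receives $(y_T: j\notin T)$. $\mathcal{F}$ is non-trivial if some $(f_1,\ldots,f_\ell)\in\mathcal{F}$ has every $f_i$ containing (with nonzero coefficient) a monomial in at least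 $d$ distinct variables. A labeling is a surjection $\mathcal{L}:[n]\to[s]$. Labelweight: for $\mathbf{c}\in\mathbb{F}^n$, $\Delta_{\mathcal{L}}(\mathbf{c})=|\{\mathcal{L}(i): c_i\neq0\}|$; for a code $\mathcal{C}$, $\Delta_{\mathcal{L}}(\mathcal{C})=\min_{\mathbf{0}\ne\mathbf{c}\in\mathcal{C}}\Delta_{\mathcal{L}}(\mathbf{c})$. Rate of a linear code of dimension $k$ in $\mathbb{F}^n$ is $k/n$. *)

From HB Require Import structures.
From mathcomp Require Import all_boot all_order all_algebra.
From mathcomp Require Import mpoly.
Set Implicit Arguments. Unset Strict Implicit. Unset Printing Implicit Defensive.
Import Order.TTheory GRing.Theory Num.Theory.
Local Open Scope ring_scope.

Section HSS.
Variable F : finFieldType.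

(* Randomness of t-CNF sharing: values y_T for T ⊆ [s], |T| = t.  We encode
   it as a finite function on all subsets that vanishes off the t-subsets. *)
Definition cnf_shares (s t : nat) (x : F) : {set {ffun {set 'I_s} -> F}} :=
  [set y : {ffun {set 'I_s} -> F} |
     [forall T : {set 'I_s}, (#|T| != t) ==> (y T == 0)] &&
     (\sum_(T : {set 'I_s} | #|T| == t) y T == x)].

(* The joint view of a coalition S of servers: server j gets y_T for j ∉ T,
   so S sees y_T exactly when |T| = t and S is not contained in T. *)
Definition cnf_view (s t : nat) (S : {set 'I_s}) (y : {ffun {set 'I_s} -> F})
  : {ffun {set 'I_s} -> F} :=
  [ffun T : {set 'I_s} => if (#|T| == t) && ~~ (S \subset T) then y T else 0].

(* t-privacy of t-CNF sharing: for any coalition of at most t servers, the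
   distribution of their shares (y uniform among valid sharings) does not
   depend on the secret.  All sets cnf_shares x have the same size, so this
   is equality of the counts of every possible view. *)
Definition cnf_private (s t : nat) : Prop :=
  forall (S : {set 'I_s}), (#|S| <= t)%N ->
  forall (x x' : F) (v : {ffun {set 'I_s} -> F}),
    #|[set y in cnf_shares s t x | cnf_view t S y == v]| =
    #|[set y in cnf_shares s t x' | cnf_view t S y == v]|.

(* Randomness for all l*m secrets x^(i)_k: Y i k T = y_T for secret (i,k). *)
Definition secret_of (s t : nat) (l m : nat)
  (Y : 'I_l -> 'I_m -> {set 'I_s} -> F) (i : 'I_l) : 'I_m -> F :=
  fun k => \sum_(T : {set 'I_s} | #|T| == t) Y i k T.

Definition server_view (s t : nat) (l m : nat) (j : 'I_s)
  (Y : 'I_l -> 'I_m -> {set 'I_s} -> F) : 'I_l -> 'I_m -> {set 'I_s} -> F :=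
  fun i k T => if (#|T| == t) && (j \notin T) then Y i k T else 0.

Definition in_POLY (d m : nat) (p : {mpoly F[m]}) : bool := (msize p <= d.+1)%N.

Definition has_rich_monomial (d m : nat) (p : {mpoly F[m]}) : Prop :=
  exists2 mon : 'X_{1..m}, mon \in msupp p & (d <= #|[set k : 'I_m | mon k != 0%N]|)%N.

Definition nontrivial_class (l d m : nat) (Fc : ('I_l -> {mpoly F[m]}) -> Prop) : Prop :=
  exists2 f, Fc f & forall i : 'I_l, has_rich_monomial d (f i).

Definition labelweight (n s : nat) (L : 'I_n -> 'I_s) (c : 'rV[F]_n) : nat :=
  #|[set L r | r in [set r : 'I_n | c 0 r != 0]]|.

End HSS.

(* Let u be a nonzero vector of F^l and suppose the functional u^T Rec only read the output
   blocks of a set S of at most d t servers.  Then Y |-> sum_i u_i f_i(x^(i)(Y)), as a function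
   of the CNF randomness Y, would be a sum of functions each depending on the view of a single
   server of S.  Pick i0 with u_i0 <> 0 and a monomial of f_i0 in d variables; as deg f_i0 <= d,
   every monomial of f_i0 involving all these variables is this one, with exponents 1.  Split S
   into d groups of at most t servers, one per variable a, and let T_a be a t-set containing
   group a.  The d-fold finite difference in the directions y^(i0,a)_(T_a) kills every server
   term, since the servers of group a do not see y_(T_a), but maps the left-hand side to
   u_i0 times the coefficient of the monomial.  Hence every nonzero word of the row span of
   Rec^T meets more than d t server blocks, so Rec^T has full rank l; the rate identity and a
   Singleton-type count then give s <= n, which is what makes a surjective labeling possible. *)

From HB Require Import structures.
From mathcomp Require Import all_boot all_order all_algebra.
From mathcomp Require Import mpoly.
From mathcomp Require Import zify.
From Stdlib Require Import FunctionalExtensionality.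
Import Order.TTheory GRing.Theory Num.Theory.
Set Implicit Arguments. Unset Strict Implicit. Unset Printing Implicit Defensive.
Local Open Scope ring_scope.

Section FiniteDifference.
Variables (A : Type) (R : comPzRingType) (I : eqType) (tau : I -> A -> A).

Fixpoint fdiff (r : seq I) (g : A -> R) : A -> R :=
  if r is i :: r' then fdiff r' (fun Y => g (tau i Y) - g Y) else g.

Lemma eq_fdiff r g h : g =1 h -> fdiff r g =1 fdiff r h.
Proof.
elim: r g h => [|i r IHr] g h eq_gh Y //=.
by apply: IHr => Z; rewrite !eq_gh.
Qed.

Lemma fdiff0 r Y : fdiff r (fun=> 0) Y = 0.
Proof.
elim: r Y => [|i r IHr] Y //=.
by rewrite (@eq_fdiff _ _ (fun=> 0)) // => Z; rewrite subrr.
Qed.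

Lemma fdiff_sum (J : Type) (s : seq J) (P : pred J) r (G : J -> A -> R) Y :
  fdiff r (fun Y => \sum_(j <- s | P j) G j Y) Y = \sum_(j <- s | P j) fdiff r (G j) Y.
Proof.
elim: r G Y => [|i r IHr] G Y //=.
rewrite -IHr; apply: eq_fdiff => Z; by rewrite sumrB.
Qed.

Lemma fdiffZ c r g Y : fdiff r (fun Y => c * g Y) Y = c * fdiff r g Y.
Proof.
elim: r g Y => [|i r IHr] g Y //=.
rewrite -IHr; apply: eq_fdiff => Z; by rewrite mulrBr.
Qed.

Hypothesis tauC : forall i j Y, tau i (tau j Y) = tau j (tau i Y).

Lemma fdiff_invariant r i g : i \in r -> (forall Y, g (tau i Y) = g Y) ->
  forall Y, fdiff r g Y = 0.
Proof.
elim: r g => [|j r IHr] g //=; rewrite in_cons => /predU1P[<- | ir] g_inv Y.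
  by rewrite (@eq_fdiff _ _ (fun=> 0)) ?fdiff0 // => Z; rewrite g_inv subrr.
by apply: IHr => // Z; rewrite tauC !g_inv.
Qed.

End FiniteDifference.

Lemma fdiff_comp (A B : Type) (R : comPzRingType) (I : eqType)
    (tauA : I -> A -> A) (tauB : I -> B -> B) (phi : A -> B) :
    (forall i Y, phi (tauA i Y) = tauB i (phi Y)) ->
  forall r (g : B -> R) Y, fdiff tauA r (g \o phi) Y = fdiff tauB r g (phi Y).
Proof.
move=> phiJ r; elim: r => [|i r IHr] g Y //=.
rewrite -IHr; apply: eq_fdiff => Z /=; by rewrite phiJ.
Qed.

Lemma indicator_of_sum_le_card (T : finType) (mu : T -> nat) (A : {set T}) :
  {in A, forall a, 0 < mu a}%N -> (\sum_i mu i <= #|A|)%N ->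
  forall i, mu i = (i \in A).
Proof.
move=> mu_pos sum_le.
have ge_ind i : ((i \in A) <= mu i)%N by case: (boolP (i \in A)) => // /mu_pos.
have sumE : (\sum_i mu i = #|A| + \sum_i (mu i - (i \in A)))%N.
  rewrite -sum1_card [in RHS]big_mkcond /= -big_split /=; apply: eq_bigr => i _.
  by have := ge_ind i; case: (i \in A) => /=; lia.
have /eqP : (\sum_i (mu i - (i \in A)) = 0)%N by move: sum_le; rewrite sumE; lia.
rewrite sum_nat_eq0 => /forallP excess0 i.
by have := excess0 i; have := ge_ind i; case: (i \in A) => /=; lia.
Qed.

Section MonomialDifference.
Variables (F : fieldType) (m : nat).

Definition delta (a : 'I_m) : 'I_m -> F := fun k => (k == a)%:R.
Definition shift (a : 'I_m) (X : 'I_m -> F) : 'I_m -> F := X \+ delta a.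
Definition mnm_eval (mu : 'I_m -> nat) (X : 'I_m -> F) : F := \prod_i X i ^+ mu i.

Lemma shiftC a b X : shift a (shift b X) = shift b (shift a X).
Proof. by apply: functional_extensionality => k; rewrite /shift /= addrAC. Qed.

Lemma eq_mnm_eval mu mu' X : mu =1 mu' -> mnm_eval mu X = mnm_eval mu' X.
Proof. by move=> eq_mu; apply: eq_bigr => i _; rewrite eq_mu. Qed.

Lemma mnm_eval_shift_free mu a X : mu a = 0%N -> mnm_eval mu (shift a X) = mnm_eval mu X.
Proof.
move=> mua0; apply: eq_bigr => i _; rewrite /shift /delta /=.
by case: eqP => [->|_]; rewrite ?mua0 ?expr0 ?addr0.
Qed.

Lemma fdiff_mnm_eval r mu : uniq r -> {in r, forall a, mu a = 1%N} ->
  forall X, fdiff shift r (mnm_eval mu) X =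
            mnm_eval (fun i => if i \in r then 0%N else mu i) X.
Proof.
elim: r mu => [|a r IHr] mu /=; first by move=> _ _ X; apply: eq_mnm_eval.
case/andP=> ar ur mu1 X.
pose mu' i := if i == a then 0%N else mu i.
have mu'1 : {in r, forall b, mu' b = 1%N}.
  move=> b br; rewrite /mu'; case: eqP => [eba|_]; first by rewrite -eba br in ar.
  by rewrite mu1 // inE br orbT.
rewrite (@eq_fdiff _ _ _ _ _ _ (mnm_eval mu')); last first.
  move=> Z; rewrite /mnm_eval (bigD1 a) //= [in X in _ - X](bigD1 a) //= [in RHS](bigD1 a) //=.
  rewrite /mu' eqxx mu1 ?mem_head // expr0 mul1r !expr1 /shift /delta /= eqxx.
  have -> : \prod_(i < m | i != a) (Z i + (i == a)%:R) ^+ mu i =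
            \prod_(i < m | i != a) Z i ^+ mu i.
    by apply: eq_bigr => i /negbTE ->; rewrite addr0.
  have -> : \prod_(i < m | i != a) Z i ^+ (if i == a then 0%N else mu i) =
            \prod_(i < m | i != a) Z i ^+ mu i.
    by apply: eq_bigr => i /negbTE ->.
  by rewrite mulrDl mul1r addrAC subrr add0r.
rewrite IHr //; apply: eq_mnm_eval => i; rewrite /mu' in_cons.
by case: (i \in r); case: (i == a).
Qed.

Variables (p : {mpoly F[m]}) (d : nat) (mon : 'X_{1..m}).
Hypotheses (p_deg : (msize p <= d.+1)%N) (mon_p : mon \in msupp p).
Let A := [set k | mon k != 0%N].
Hypothesis d_le_A : (d <= #|A|)%N.

Lemma mdeg_msupp_le mu : mu \in msupp p -> (mdeg mu <= d)%N.
Proof. by move/msize_mdeg_lt/leq_trans/(_ p_deg). Qed.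

Lemma msupp_indicator mu : mu \in msupp p -> {in A, forall a, 0 < mu a}%N ->
  forall i, mu i = (i \in A).
Proof.
move=> mu_p mu_pos; apply: indicator_of_sum_le_card => //.
by rewrite -mdegE (leq_trans (mdeg_msupp_le mu_p)).
Qed.

Lemma mon_indicator i : mon i = (i \in A).
Proof. by apply: msupp_indicator => // a; rewrite inE lt0n. Qed.

Lemma card_mon_support : #|A| = d.
Proof.
apply/eqP; rewrite eqn_leq d_le_A andbT.
have sumA : (\sum_i (i \in A) = #|A|)%N by rewrite -sum1_card [RHS]big_mkcond.
by rewrite -sumA -(eq_bigr _ (fun i _ => mon_indicator i)) -mdegE mdeg_msupp_le.
Qed.

Lemma fdiff_meval_mon_support :
  fdiff shift (enum A) (fun X => p.@[X]) (fun=> 0) = p@_mon.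
Proof.
rewrite (@eq_fdiff _ _ _ _ _ _ (fun X => \sum_(mu <- msupp p) p@_mu * mnm_eval mu X)); last first.
  by move=> X; rewrite mevalE.
rewrite fdiff_sum (bigD1_seq mon) ?msupp_uniq //= big1_seq ?addr0.
  rewrite fdiffZ fdiff_mnm_eval ?enum_uniq //; last by move=> a; rewrite mem_enum mon_indicator => ->.
  rewrite /mnm_eval big1 ?mulr1 // => i _; rewrite mem_enum mon_indicator.
  by case: (i \in A); rewrite expr0.
move=> mu /andP[mu_mon mu_p]; rewrite fdiffZ.
case: (boolP [forall a in A, 0 < mu a]%N) => [/forall_inP mu_pos|].
  suff mu_eq : mu = mon by rewrite mu_eq eqxx in mu_mon.
  by apply/mnmP => i; rewrite msupp_indicator // mon_indicator.
rewrite negb_forall_in => /exists_inP[a aA]; rewrite lt0n negbK => /eqP mua0.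
rewrite (@fdiff_invariant _ _ _ _ shiftC _ a) ?mulr0 ?mem_enum //.
by move=> Y; apply: mnm_eval_shift_free.
Qed.

End MonomialDifference.

Lemma exists_card_between (T : finType) (k : nat) (X Y : {set T}) :
  X \subset Y -> (#|X| <= k <= #|Y|)%N ->
  exists Z : {set T}, [/\ X \subset Z, Z \subset Y & #|Z| = k].
Proof.
move=> XY /andP[Xk kY].
pose W := [set x in take (k - #|X|) (enum (Y :\: X))].
have WYX : W \subset Y :\: X by apply/subsetP => x; rewrite inE => /mem_take; rewrite mem_enum.
exists (X :|: W); split; first exact: subsetUl.
  by rewrite subUset XY (subset_trans WYX) ?subsetDl.
have cardW : #|W| = (k - #|X|)%N.
  rewrite cardsE (card_uniqP _) ?take_uniq ?enum_uniq // size_takel // -cardE cardsD.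
  by rewrite (setIidPr XY); lia.
rewrite cardsU cardW (_ : X :&: W = set0) ?cards0; first by lia.
apply/setP => x; rewrite inE in_set0.
case: (boolP (x \in W)) => [/(subsetP WYX)|]; last by rewrite andbF.
by rewrite inE => /andP[/negbTE -> _].
Qed.

Lemma exists_map_small_fibers (s m t : nat) (a0 : 'I_m) (S : {set 'I_s}) (A : {set 'I_m}) :
  (0 < t)%N -> (#|S| <= #|A| * t)%N ->
  exists g : 'I_s -> 'I_m, {in S, forall j, g j \in A} /\
    forall a, (#|[set j in S | g j == a]| <= t)%N.
Proof.
move=> t_gt0 S_le.
pose g j := nth a0 (enum A) (index j (enum S) %/ t).
have block_lt j : j \in S -> (index j (enum S) %/ t < size (enum A))%N.
  move=> jS; rewrite -cardE ltn_divLR //.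
  have : (index j (enum S) < size (enum S))%N by rewrite index_mem mem_enum.
  by rewrite -cardE; lia.
exists g; split=> [j jS|a]; first by rewrite -mem_enum mem_nth ?block_lt.
pose h j := Ordinal (ltn_pmod (index j (enum S)) t_gt0).
have h_inj : {in [set j in S | g j == a] &, injective h}.
  move=> j j'; rewrite !inE => /andP[jS /eqP gja] /andP[j'S /eqP gj'a] /(congr1 val) /= hjj'.
  have /eqP : g j = g j' by rewrite gja gj'a.
  rewrite nth_uniq ?enum_uniq ?block_lt // => /eqP qjj'.
  have idx_eq : index j (enum S) = index j' (enum S).
    by rewrite (divn_eq (index j _) t) (divn_eq (index j' _) t) qjj' hjj'.
  by rewrite -(nth_index j (_ : j \in enum S)) ?mem_enum // idx_eq nth_index ?mem_enum.
by rewrite -(card_in_imset h_inj) (leq_trans (max_card _)) ?card_ord.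
Qed.

Lemma exists_t_subsets_cover (s m t : nat) (a0 : 'I_m) (S : {set 'I_s}) (A : {set 'I_m}) :
  (0 < t)%N -> (t <= s)%N -> (#|S| <= #|A| * t)%N ->
  exists (g : 'I_s -> 'I_m) (T : 'I_m -> {set 'I_s}),
    [/\ {in S, forall j, g j \in A}, {in S, forall j, j \in T (g j)} & forall a, #|T a| = t].
Proof.
move=> t_gt0 t_le_s S_le.
have [g [gA g_fibers]] := exists_map_small_fibers a0 t_gt0 S_le.
have /fin_all_exists[T TP] (a : 'I_m) : exists Z : {set 'I_s},
    [set j in S | g j == a] \subset Z /\ #|Z| = t.
  have [|Z [fibZ _ cardZ]] := @exists_card_between _ t _ _ (subsetT [set j in S | g j == a]).
    by rewrite g_fibers cardsT card_ord.
  by exists Z.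
exists g, T; split=> // [j jS|a]; last by case: (TP a).
by case: (TP (g j)) => /subsetP -> //; rewrite inE jS eqxx.
Qed.

Section SurjectiveRelabeling.
Variables (n s : nat).
Hypothesis s_le_n : (s <= n)%N.
Implicit Types L : 'I_n -> 'I_s.

Lemma not_injective_of_not_surjective L j0 : j0 \notin L @: setT ->
  exists r1 r2, r1 != r2 /\ L r1 = L r2.
Proof.
move=> j0_out.
case: (boolP [exists r1, exists r2, (r1 != r2) && (L r1 == L r2)]).
  by case/existsP => r1 /existsP[r2 /andP[r12 /eqP eL]]; exists r1, r2.
rewrite negb_exists => /forallP noncollision.
have L_inj : injective L.
  move=> r1 r2 eL; apply/eqP; move: (noncollision r1); rewrite negb_exists.
  by move=> /forallP/(_ r2); rewrite eL eqxx andbT negbK.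
suff: L @: setT = setT by move=> imL; rewrite imL inE in j0_out.
by apply/eqP; rewrite eqEcard subsetT card_imset // !cardsT !card_ord.
Qed.

Lemma relabel_step L j0 : j0 \notin L @: setT ->
  exists L', (#|L @: setT| < #|L' @: setT|)%N /\ forall R : {set 'I_n}, (#|L @: R| <= #|L' @: R|)%N.
Proof.
move=> j0_out; have [r1 [r2 [r12 eL]]] := not_injective_of_not_surjective j0_out.
pose L' r := if r == r1 then j0 else L r.
have L'_off (R : {set 'I_n}) : r1 \notin R -> L' @: R = L @: R.
  move=> r1R; apply: eq_in_imset => r rR; rewrite /L'; case: eqP => // err1.
  by rewrite -err1 rR in r1R.
have L'_on (R : {set 'I_n}) : r1 \in R -> L' @: R = j0 |: L @: (R :\ r1).
  move=> r1R; rewrite -{1}(setD1K r1R) imsetU1 /L' eqxx (L'_off (R :\ r1)) //.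
  by rewrite !inE eqxx.
have j0_outD (R : {set 'I_n}) : j0 \notin L @: R.
  by apply: contra j0_out => /imsetP[r _ ->]; apply/imsetP; exists r.
have LR_le (R : {set 'I_n}) : (#|L @: R| <= #|L @: (R :\ r1)|.+1)%N.
  case: (boolP (r1 \in R)) => [r1R|r1R].
    by rewrite -{1}(setD1K r1R) imsetU1 cardsU1; case: (_ \notin _).
  by rewrite (setDidPl _) ?leqnSn // disjoint_sym disjoints1.
exists L'; split=> [|R].
  rewrite L'_on ?inE // cardsU1 j0_outD add1n ltnS subset_leq_card //.
  apply/subsetP => j /imsetP[r _ ->]; apply/imsetP.
  case: (eqVneq r r1) => [->|rr1]; first by exists r2; rewrite ?inE // /L' eq_sym (negbTE r12).
  by exists r; rewrite ?inE // /L' (negbTE rr1).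
case: (boolP (r1 \in R)) => r1R; last by rewrite L'_off.
by rewrite L'_on // cardsU1 j0_outD add1n LR_le.
Qed.

Lemma exists_surjective_relabel L : exists L',
  (forall j, exists r, L' r = j) /\ forall R : {set 'I_n}, (#|L @: R| <= #|L' @: R|)%N.
Proof.
move: {2}(s - #|L @: setT|)%N (leqnn (s - #|L @: setT|)) => k.
elim: k L => [|k IHk] L k_ge.
  exists L; split=> // j.
  have : L @: setT = setT.
    by apply/eqP; rewrite eqEcard subsetT cardsT card_ord; lia.
  by move/setP/(_ j); rewrite !inE => /imsetP[r _ ->]; exists r.
case: (boolP [exists j, j \notin L @: setT]) => [/existsP[j0 j0_out]|]; last first.
  rewrite negb_exists => /forallP L_onto; exists L; split=> // j.
  by have /negPn/imsetP[r _ ->] := L_onto j; exists r.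
have [L1 [L1_gt L1_dom]] := relabel_step j0_out.
have [|L' [L'_onto L'_dom]] := IHk L1; first by lia.
by exists L'; split=> // R; apply: leq_trans (L'_dom R).
Qed.

End SurjectiveRelabeling.

Section CNFDifferences.
Variables (l t s d m : nat) (F : finFieldType).
Local Notation rand := ('I_l -> 'I_m -> {set 'I_s} -> F).

Definition unit_rand (i : 'I_l) (a : 'I_m) (T : {set 'I_s}) : rand :=
  fun i' k T' => ((i' == i) && (k == a) && (T' == T))%:R.
Definition shift_rand (w Y : rand) : rand := fun i k T => Y i k T + w i k T.

Lemma shift_randC w w' Y : shift_rand w (shift_rand w' Y) = shift_rand w' (shift_rand w Y).
Proof.
apply: functional_extensionality => i; apply: functional_extensionality => k.
by apply: functional_extensionality => T; rewrite /shift_rand addrAC.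
Qed.

Lemma server_view_shift_unit (j : 'I_s) i a (T : {set 'I_s}) Y : j \in T ->
  server_view t j (shift_rand (unit_rand i a T) Y) = server_view t j Y.
Proof.
move=> jT; apply: functional_extensionality => i'; apply: functional_extensionality => k.
apply: functional_extensionality => T'; rewrite /server_view /shift_rand /unit_rand.
by case: (boolP (_ == T)) => [/eqP->|_]; rewrite ?jT ?andbF ?addr0.
Qed.

Lemma secret_of_shift_unit_other i0 a (T : {set 'I_s}) Y i : i != i0 ->
  secret_of t (shift_rand (unit_rand i0 a T) Y) i = secret_of t Y i.
Proof.
move=> /negbTE ii0; apply: functional_extensionality => k; apply: eq_bigr => T' _.
by rewrite /shift_rand /unit_rand ii0 addr0.
Qed.

Lemma secret_of_shift_unit i0 a (T : {set 'I_s}) Y : #|T| = t ->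
  secret_of t (shift_rand (unit_rand i0 a T) Y) i0 = shift a (secret_of t Y i0).
Proof.
move=> cardT; apply: functional_extensionality => k.
rewrite /secret_of /shift_rand /shift /delta /= big_split /=; congr (_ + _).
rewrite (bigD1 T) ?cardT //= big1 => [|T' /andP[_ /negbTE TT']]; last first.
  by rewrite /unit_rand TT' andbF.
by rewrite /unit_rand !eqxx andbT addr0.
Qed.

Lemma secret_of_zero i : secret_of t ((fun _ _ _ => 0) : rand) i = fun=> 0.
Proof. by apply: functional_extensionality => k; rewrite /secret_of big1. Qed.

Lemma combination_not_computable_by_coalition (f : 'I_l -> {mpoly F[m]})
    (u : 'I_l -> F) (i0 : 'I_l) (S : {set 'I_s}) (phi : 'I_s -> rand -> F) :
    (0 < t)%N -> (t <= s)%N -> (0 < d)%N -> in_POLY d (f i0) ->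
    has_rich_monomial d (f i0) -> u i0 != 0 -> (#|S| <= d * t)%N ->
  ~ (forall Y : rand, \sum_i u i * (f i).@[secret_of t Y i] =
                      \sum_(j in S) phi j (server_view t j Y)).
Proof.
move=> t_gt0 t_le_s d_gt0 f_deg [mon mon_f d_le] ui0 S_le computes.
set A := [set k | mon k != 0%N] in d_le.
have cardA := card_mon_support f_deg mon_f d_le.
have diffA := fdiff_meval_mon_support f_deg mon_f d_le.
have [a0 a0A] : exists a0, a0 \in A by apply/card_gt0P; rewrite cardA.
rewrite -cardA in S_le.
have [g [T [gA gT cardT]]] := exists_t_subsets_cover a0 t_gt0 t_le_s S_le.
pose tau a := shift_rand (unit_rand i0 a (T a)).
have tauC a b Y : tau a (tau b Y) = tau b (tau a Y) by apply: shift_randC.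
have := eq_fdiff tau (enum A) computes ((fun _ _ _ => 0) : rand).
rewrite !fdiff_sum [RHS]big1 => [|j jS]; last first.
  apply: (fdiff_invariant tauC (i := g j)); first by rewrite mem_enum gA.
  by move=> Y; rewrite /tau server_view_shift_unit ?gT.
rewrite (bigD1 i0) //= big1 ?addr0 => [|i ii0]; last first.
  apply: (fdiff_invariant tauC (i := a0)); first by rewrite mem_enum.
  by move=> Y; rewrite /tau secret_of_shift_unit_other.
have secret_tau a Y : secret_of t (tau a Y) i0 = shift a (secret_of t Y i0).
  exact: secret_of_shift_unit.
rewrite fdiffZ (fdiff_comp secret_tau _ (fun X => (f i0).@[X])).
rewrite secret_of_zero diffA => /eqP; rewrite mulf_eq0 (negbTE ui0) /=.
by rewrite mcoeff_msupp in mon_f; apply/negP.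
Qed.

End CNFDifferences.

Section BlockCodes.
Variables (F : finFieldType) (s l w : nat) (nj : 'I_s -> nat).
Variable Rec : 'M[F]_(\sum_(j < s) nj j, l).
Local Notation N := (\sum_(j < s) nj j)%N.

Definition block_support (u : 'cV[F]_l) := [set j | submxcol (Rec *m u) j != 0].

Hypothesis block_support_gt : forall u, u != 0 -> (w < #|block_support u|)%N.

Lemma weight_lt_servers : (0 < l)%N -> (w < s)%N.
Proof.
move=> l_gt0; have nz1 : (const_mx 1 : 'cV[F]_l) != 0.
  by apply/negP => /eqP/matrixP/(_ (Ordinal l_gt0) 0); rewrite !mxE => /eqP; rewrite oner_eq0.
by rewrite (leq_trans (block_support_gt nz1)) // (leq_trans (max_card _)) ?card_ord.
Qed.

Lemma length_outside_ge (K : {set 'I_s}) : (#|K| <= w)%N ->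
  (l <= \sum_(j < s | j \notin K) nj j)%N.
Proof.
move=> K_le.
pose Sig := (\sum_(j < s | j \notin K) <<submxcol Rec j>>)%MS.
have Sig_inj (u : 'cV_l) : Sig *m u = 0 -> u = 0.
  move=> Sig_u; apply/eqP; apply: contraT => nz_u.
  suff : (#|block_support u| <= w)%N by rewrite leqNgt block_support_gt.
  apply: leq_trans K_le; apply: subset_leq_card; apply/subsetP => j.
  rewrite inE; apply: contraR => jK.
  have /submxP[D RecjE] : (submxcol Rec j <= Sig)%MS by rewrite (sumsmx_sup j) ?genmxE.
  by rewrite -submxcol_mul RecjE -mulmxA Sig_u mulmx0.
have rank_Sig : \rank Sig = l.
  rewrite -mxrank_tr; apply/eqP; change (row_free Sig^T); rewrite -kermx_eq0.
  apply/eqP/row_matrixP => i; rewrite row0.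
  have /(congr1 trmx) : row i (kermx Sig^T) *m Sig^T = 0 by apply/sub_kermxP/row_sub.
  by rewrite trmx_mul trmxK trmx0 => /Sig_inj/(congr1 trmx); rewrite trmxK trmx0.
rewrite -rank_Sig (leq_trans (mxrank_sum_leqif _).1) //.
by rewrite /=; apply: leq_sum => j _; rewrite mxrank_gen rank_leq_row.
Qed.

Lemma servers_le_length : (0 < l)%N -> (0 < w)%N -> (l * s = N * (s - w))%N -> (s <= N)%N.
Proof.
move=> l_gt0 w_gt0 rate.
pose Z := [set j : 'I_s | 0 < nj j]%N.
have [Z_le|w_lt_Z] := leqP #|Z| w.
  have := length_outside_ge Z_le; rewrite big1 => [|j]; first by rewrite leqNgt l_gt0.
  by rewrite inE lt0n negbK => /eqP.
have [|K [_ KZ cardK]] := @exists_card_between _ w set0 Z (sub0set _).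
  by rewrite cards0 /= ltnW.
set a := (\sum_(j < s | j \in K) nj j)%N; set b := (\sum_(j < s | j \notin K) nj j)%N.
have l_le_b : (l <= b)%N := length_outside_ge (eq_leq cardK).
have w_le_a : (w <= a)%N.
  rewrite -cardK -sum1_card; apply: leq_sum => j jK.
  by have := subsetP KZ j jK; rewrite inE.
have Nab : N = (a + b)%N by rewrite (bigID (fun j => j \in K)).
have [s_le_w|w_lt_s] := leqP s w.
  by move: rate; rewrite (eqnP s_le_w) muln0; nia.
have Nc_le : (N * (s - w) <= b * s)%N by rewrite -rate leq_mul2r l_le_b orbT.
rewrite Nab -(subnK (ltnW w_lt_s)); rewrite Nab -{2}(subnK (ltnW w_lt_s)) in Nc_le.
clearbody a b; move: (s - w)%N Nc_le => c Nc_le.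
have c_le_b : (c <= b)%N by nia.
by rewrite addnC leq_add.
Qed.

Definition block_label (r : 'I_N) : 'I_s := tagnat.sig1 r.

Lemma labelweight_block_code (x : 'rV[F]_l) : x != 0 ->
  (w < labelweight block_label (x *m Rec^T))%N.
Proof.
move=> nz_x; have nz_xT : x^T != 0 by rewrite -trmx0 (inj_eq trmx_inj).
apply: leq_trans (block_support_gt nz_xT) _; apply/subset_leq_card/subsetP => j.
rewrite inE => /matrix0Pn[q [k]].
rewrite ord1 !mxE => nz_q; apply/imsetP; exists (tagnat.Rank j q); last first.
  by rewrite /block_label tagnat.Rank1K.
by rewrite inE -[x *m _]trmxK trmx_mul trmxK !mxE.
Qed.

Lemma rank_block_code : \rank Rec^T = l.
Proof.
apply/eqP; change (row_free Rec^T); rewrite -kermx_eq0.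
apply/eqP/row_matrixP => i; rewrite row0.
apply/eqP; apply: contraT => nz_row.
have := labelweight_block_code nz_row.
rewrite (sub_kermxP (row_sub i _)) /labelweight.
rewrite (_ : [set r | _] = set0) ?imset0 ?cards0 //.
by apply/setP => r; rewrite !inE mxE eqxx.
Qed.

(* Servers with n_j = 0 are missed by block_label; relabeling fixes this without lowering
   any labelweight. *)
Lemma exists_surjective_block_code : (s <= N)%N ->
  exists (G : 'M[F]_(l, N)) (L : 'I_N -> 'I_s),
    [/\ \rank G = l, forall j, exists r, L r = j &
        forall c : 'rV_N, (c <= G)%MS -> c != 0 -> (w < labelweight L c)%N].
Proof.
move=> s_le_N; have [L [L_onto L_dom]] := exists_surjective_relabel s_le_N block_label.
exists Rec^T, L; split=> [|//|c /submxP[x ->] nz_c]; first exact: rank_block_code.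
have nz_x : x != 0 by apply: contraNneq nz_c => ->; rewrite mul0mx.
exact: leq_trans (labelweight_block_code nz_x) (L_dom _).
Qed.

End BlockCodes.

(* Privacy is only used here: for t > s there are no t-subsets, so only 0 can be shared. *)
Lemma cnf_private_t_le_s (F : finFieldType) s t : cnf_private F s t -> (t <= s)%N.
Proof.
move=> priv; rewrite leqNgt; apply/negP => s_lt_t.
have no_tset (T : {set 'I_s}) : (#|T| == t) = false.
  by apply/negbTE; have := max_card T; rewrite card_ord; lia.
have := priv set0 _ 0 1 (cnf_view t set0 [ffun=> 0]); rewrite cards0 => /(_ isT).
set L := #|_|; set R := #|_|.
have -> : R = 0%N.
  apply/eqP; rewrite cards_eq0; apply/eqP/setP => y; rewrite !inE.
  by rewrite big_pred0 // eq_sym oner_eq0 !andbF.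
suff : (0 < L)%N by move=> + L0; rewrite L0.
apply/card_gt0P; exists [ffun=> 0]; rewrite !inE eqxx andbT.
apply/andP; split; first by apply/forallP => T; rewrite ffunE eqxx implybT.
by rewrite big1 // => T _; rewrite ffunE.
Qed.

Lemma rate_cross_mul (l s w N : nat) : (w < s)%N ->
    (l%:R / N%:R : rat) = (s%:R - w%:R) / s%:R ->
  (l * s = N * (s - w))%N.
Proof.
move=> w_lt_s; rewrite -natrB ?(ltnW w_lt_s) //.
have [->|N_gt0] := posnP N.
  by rewrite invr0 mulr0 => /eqP; rewrite eq_sym mulf_eq0 invr_eq0 !pnatr_eq0; lia.
move=> /eqP; rewrite eqr_div ?pnatr_eq0 -?lt0n //; last by lia.
by rewrite -!natrM eqr_nat => /eqP->; rewrite mulnC.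
Qed.

Section HSSBlocks.
Variables (l t s d m : nat) (F : finFieldType) (f : 'I_l -> {mpoly F[m]}).
Variables (nj : 'I_s -> nat) (Rec : 'M[F]_(\sum_(j < s) nj j, l)).
Variable Ev : forall j : 'I_s, ('I_l -> 'I_m -> {set 'I_s} -> F) -> 'rV[F]_(nj j).
Hypotheses (t_gt0 : (0 < t)%N) (t_le_s : (t <= s)%N) (d_gt0 : (0 < d)%N).
Hypotheses (f_deg : forall i, in_POLY d (f i)) (f_rich : forall i, has_rich_monomial d (f i)).
Hypothesis correct : forall Y,
  mxrow (fun j => Ev j (server_view t j Y)) *m Rec = \row_(i < l) (f i).@[secret_of t Y i].

Lemma hss_block_support_gt (u : 'cV[F]_l) : u != 0 -> (d * t < #|block_support Rec u|)%N.
Proof.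
move=> /matrix0Pn[i0 [k nz_ui0]]; rewrite ord1 in nz_ui0; rewrite ltnNge; apply/negP => S_le.
apply: (combination_not_computable_by_coalition (u := fun i => u i 0) t_gt0 t_le_s d_gt0
  (f_deg i0) (f_rich i0) nz_ui0 S_le (phi := fun j V => (Ev j V *m submxcol (Rec *m u) j) 0 0)) => Y.
have := congr1 (fun M => (M *m u) 0 0) (correct Y).
rewrite /= -mulmxA -[Rec *m u]submxcolK mul_mxrow_mxcol summxE => decodeE.
transitivity ((\row_(i < l) (f i).@[secret_of t Y i] *m u) 0 0).
  by rewrite mxE; apply: eq_bigr => i _; rewrite mxE mulrC.
rewrite -decodeE submxcolK (bigID (mem (block_support Rec u))) /=.
rewrite [X in _ + X]big1 ?addr0 // => j.
by rewrite inE negbK => /eqP->; rewrite mulmx0 mxE.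
Qed.

End HSSBlocks.

Theorem mainTheorem2
  (l t s d m : nat) (F : finFieldType)
  (Hl : (0 < l)%N) (Ht : (0 < t)%N) (Hs : (0 < s)%N) (Hd : (0 < d)%N) (Hm : (0 < m)%N)
  (Hmd : (d <= m)%N)
  (Fc : ('I_l -> {mpoly F[m]}) -> Prop)
  (HFc : forall f, Fc f -> forall i, in_POLY d (f i))
  (Hnontriv : nontrivial_class d Fc)
  (Hpriv : cnf_private F s t)
  (nj : 'I_s -> nat)
  (Eval : ('I_l -> {mpoly F[m]}) -> forall j : 'I_s,
            ('I_l -> 'I_m -> {set 'I_s} -> F) -> 'rV[F]_(nj j))
  (Rec : 'M[F]_(\sum_(j < s) nj j, l))
  (Hcorrect : forall f, Fc f -> forall Y : 'I_l -> 'I_m -> {set 'I_s} -> F,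
      @mxrow F s nj 1 (fun j => Eval f j (server_view t j Y)) *m Rec
      = \row_(i < l) (f i).@[secret_of t Y i])
  (Hrate : (l%:R / (\sum_(j < s) nj j)%:R : rat) = ((s%:R - (d * t)%:R) / s%:R)) :
  let n := ((l * s) %/ (s - d * t))%N in
  exists (k : nat) (G : 'M[F]_(k, n)) (L : 'I_n -> 'I_s),
    [/\
        ((\rank G)%:R / n%:R : rat) = ((s%:R - (d * t)%:R) / s%:R),
        (forall j : 'I_s, exists r : 'I_n, L r = j) &
        (forall c : 'rV[F]_n, (c <= G)%MS -> c != 0 ->
           (d * t + 1 <= labelweight L c)%N)].
Proof.
move=> n.
have t_le_s := cnf_private_t_le_s Hpriv.
have [f Hf f_rich] := Hnontriv.
have support_gt := hss_block_support_gt Ht t_le_s Hd (HFc f Hf) f_rich (Hcorrect f Hf).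
have dt_lt_s := weight_lt_servers support_gt Hl.
have rate := rate_cross_mul dt_lt_s Hrate.
have dt_gt0 : (0 < d * t)%N by rewrite muln_gt0 Hd Ht.
have s_le_N := servers_le_length support_gt Hl dt_gt0 rate.
have [G [L [rankG L_onto G_weight]]] := exists_surjective_block_code support_gt s_le_N.
have nE : ((l * s) %/ (s - d * t))%N = (\sum_(j < s) nj j)%N by rewrite rate mulnK ?subn_gt0.
rewrite /n nE; exists l, G, L; split=> // [|c c_G nz_c]; first by rewrite rankG.
by rewrite addn1; apply: G_weight.
Qed.
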